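(* Let $\beta$ be a non-negative integer and $k$ a positive integer. If $\beta+k\equiv 0 \pmod{q-1}$, then $L(\chi_t^\beta,-k)=0$; if $\beta+k\not\equiv 0\pmod{q-1}$, then $L(\chi_t^\beta,-k)\neq 0$. Moreover, whenever $\beta+k\equiv 0\pmod{q-1}$, the zero is simple: the derivative $\frac{\partial}{\partial x}z(\chi_t^\beta,x,-k)$ does not vanish at $x=1$.
   Context: Let $q$ be a power of a prime $p$, $A=\mathbb{F}_q[\theta]$, and $A_+(d)$ the set of monic polynomials in $A$ of degree $d$. Let $t$ be an indeterminate and $\chi_t:A\to\mathbb{F}_q[t]$ the $\mathbb{F}_q$-algebra morphism with $\theta\mapsto t$; $\chi_t(a)^0:=1$. For non-negative integers $\beta,k,d$ let $S_d(\chi_t^\beta,k):=\sum_{a\in A_+(d)}\chi_t(a)^\beta a^k\in A[t]$. It is known that $S_d(\chi_t^\beta,k)=0$ for $d$ sufficiently large, so the special polynomial $z(\chi_t^\beta,x,-k):=\sum_{d\ge0}x^{-d}S_d(\chi_t^\beta,k)$ lies in $A[t][x^{-1}]$. Define $L(\chi_t^\beta,-k):=z(\chi_t^\beta,1,-k)\in A[t]$ (the value of Pellarin's $L$-series at $-k$). *)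

From HB Require Import structures.
From mathcomp Require Import all_boot all_order all_algebra.
Set Implicit Arguments. Unset Strict Implicit. Unset Printing Implicit Defensive.
Import GRing.Theory.
Local Open Scope ring_scope.

(* F = F_q (any finite field, q = #|F|), A = F[theta] = {poly F},
   A[t] = {poly {poly F}} (polynomials in t with coefficients in A). *)

(* The monic polynomial of degree d with lower coefficients c. Every monic
   polynomial of degree d arises from exactly one c : {ffun 'I_d -> F}. *)
Definition monic_of (F : finFieldType) (d : nat) (c : {ffun 'I_d -> F}) : {poly F} :=
  'X^d + \sum_(i < d) c i *: 'X^i.

(* chi_t : A -> F_q[t] subset A[t], theta |-> t (coefficients become constants of A). *)
Definition chi_t (F : finFieldType) (a : {poly F}) : {poly {poly F}} :=
  map_poly polyC a.

Definition Sd (F : finFieldType) (beta k d : nat) : {poly {poly F}} :=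
  \sum_(c : {ffun 'I_d -> F}) (chi_t (monic_of c)) ^+ beta * ((monic_of c)%:P) ^+ k.

(* Truncation of z(chi_t^beta, x, -k) = sum_d x^{-d} S_d evaluated at x = 1:
   sum_{d < N} S_d.  Equals L(chi_t^beta,-k) once S_d = 0 for all d >= N. *)
Definition Ltrunc (F : finFieldType) (beta k N : nat) : {poly {poly F}} :=
  \sum_(d < N) Sd F beta k d.

(* d/dx z(chi_t^beta, x, -k) at x = 1, truncated:
   d/dx (x^{-d}) = -d x^{-d-1}, which is -d at x = 1. *)
Definition dzdx_at1_trunc (F : finFieldType) (beta k N : nat) : {poly {poly F}} :=
  \sum_(d < N) (- (d%:R)) * Sd F beta k d.

From mathcomp Require Import all_boot all_order all_algebra all_fingroup all_solvable all_field.
Set Implicit Arguments. Unset Strict Implicit. Unset Printing Implicit Defensive.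
Import GRing.Theory FinRing.Theory.
Local Open Scope ring_scope.

(* Specialising theta = t = 0 is a ring morphism ev : A[t] -> F_q sending the
   summand of S_d indexed by a to the (beta + k)-th power of a(0).  Hence
   ev S_0 = 1, ev S_1 = sum_{x in F_q} x^(beta+k), which is -1 or 0 according as
   q - 1 divides beta + k or not, and ev S_d = 0 for d >= 2 since q = 0 in F_q.
   This gives ev L = 1 when q - 1 does not divide beta + k, and
   ev (dz/dx at 1) = -ev S_1 = 1 when it does.
   For the vanishing of L, let S_{<M} be the same sum over all polynomials of
   degree < M.  Expanding chi_t(a)^beta a^k multilinearly in the coefficients
   of a, S_{<M} = 0 as soon as beta + k < M (q - 1); and sorting the polynomials
   of degree M by their leading coefficient x, the homogeneity
   chi_t(x a)^beta (x a)^k = x^(beta+k) chi_t(a)^beta a^k gives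
   S_{<M+1} = S_{<M} + (q - 1) S_M = S_{<M} - S_M when q - 1 divides beta + k.
   So L = -S_{<M} = 0 for M large. *)

Section FinFieldPowerSums.
Variable F : finFieldType.

Lemma natr_card_finField : (#|F|%:R : F) = 0.
Proof. by have := expg_cardG (in_setT (1 : F)); rewrite cardsT zmodXgE. Qed.

Lemma natr_card_pred_finField : (#|F|.-1%:R : F) = -1.
Proof.
apply/eqP; rewrite -subr_eq0 opprK -mulrSr prednK ?natr_card_finField //.
exact: ltnW (finNzRing_gt1 F).
Qed.

Lemma expf_card_pred_dvdn (x : F) m : x != 0 -> (#|F|.-1 %| m)%N -> x ^+ m = 1.
Proof.
move=> x_neq0 /dvdnP[c ->]; rewrite mulnC exprM.
suff -> : x ^+ #|F|.-1 = 1 by rewrite expr1n.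
apply: (mulIf x_neq0); rewrite mul1r -exprSr prednK ?expf_card //.
exact: ltnW (finNzRing_gt1 F).
Qed.

Lemma exists_primitive_elem :
  exists2 u : F, u != 0 & forall m, u ^+ m = 1 -> (#|F|.-1 %| m)%N.
Proof.
have /cyclicP[x def_units] := field_unit_group_cyclic [set: {unit F}]%G.
exists (val x); first by rewrite -unitfE (valP x).
move=> m xm1; have xm1g : (x ^+ m = 1)%g by apply: val_inj; rewrite val_unitX.
by rewrite -card_finField_unit def_units -/(order x) order_dvdn xm1g.
Qed.

Lemma sum_expf m :
  \sum_(x : F) x ^+ m = if (0 < m)%N && (#|F|.-1 %| m)%N then -1 else 0.
Proof.
have [-> | m_gt0] := posnP m.
  rewrite (eq_bigr (fun _ => 1)) => [|x _]; last exact: expr0.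
  by rewrite sumr_const cardT -cardE natr_card_finField.
case: ifPn => [dvd_m | ndvd_m].
  rewrite (bigD1 0) //= expr0n gtn_eqF // add0r.
  rewrite (eq_bigr (fun _ => 1)) => [|x x_neq0]; last exact: expf_card_pred_dvdn.
  by rewrite sumr_const cardC1 natr_card_pred_finField.
(* A primitive element u permutes F and multiplies the sum by u ^+ m != 1. *)
have [u u_neq0 u_prim] := exists_primitive_elem.
have um_neq1 : u ^+ m != 1 by apply: contra ndvd_m => /eqP /u_prim.
have : \sum_(x : F) x ^+ m = u ^+ m * \sum_(x : F) x ^+ m.
  rewrite mulr_sumr (reindex_inj (mulfI u_neq0)) /=.
  by apply: eq_bigr => x _; rewrite exprMn.
move/eqP; rewrite -subr_eq0 -{1}[\sum_x _]mul1r -mulrBl mulf_eq0.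
by rewrite subr_eq0 eq_sym (negbTE um_neq1) => /eqP.
Qed.

(* Multiplicity counting: the product is the monomial prod_i g_i^(m_i) with
   sum_i m_i = n, so some m_i < q - 1 and its factor sum_x x^(m_i) is 0. *)
Lemma sum_ffun_monomial_eq0 (M n : nat) (s : 'I_n -> 'I_M) :
  (n < M * #|F|.-1)%N ->
  \sum_(g : {ffun 'I_M -> F}) \prod_(j < n) g (s j) = 0.
Proof.
move=> n_lt; pose m (i : 'I_M) := #|[pred j | s j == i]|.
have prodE (g : {ffun 'I_M -> F}) : \prod_(j < n) g (s j) = \prod_i g i ^+ m i.
  rewrite (partition_big s predT) //=; apply: eq_bigr => i _.
  by rewrite (eq_bigr (fun _ => g i)) ?prodr_const // => j /eqP ->.
under eq_bigr do rewrite prodE.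
rewrite -(bigA_distr_bigA (fun i (x : F) => x ^+ m i)).
have sum_m : (\sum_i m i = n)%N.
  rewrite -[RHS]card_ord -sum1_card (partition_big s predT) //=.
  by apply: eq_bigr => i _; rewrite sum1_card.
have [i0 m_i0_small | m_big] := pickP [pred i | (m i < #|F|.-1)%N]; last first.
  suff : (M * #|F|.-1 <= n)%N by rewrite leqNgt n_lt.
  rewrite -sum_m -[M in (M * _)%N]card_ord -sum_nat_const.
  by apply: leq_sum => i _; rewrite leqNgt; apply/negbT/m_big.
rewrite (bigD1 i0) //= sum_expf; case: ifP => [/andP[m_gt0 dvd_m] | _]; last first.
  by rewrite mul0r.
by move: m_i0_small; rewrite /= ltnNge dvdn_leq.
Qed.

Lemma sum_ffun_prod_linear_eq0 (R : comPzRingType) (f : {rmorphism F -> R})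
    (M n : nat) (W : 'I_n -> 'I_M -> R) :
  (n < M * #|F|.-1)%N ->
  \sum_(g : {ffun 'I_M -> F}) \prod_(j < n) \sum_(i < M) f (g i) * W j i = 0.
Proof.
move=> n_lt; under eq_bigr do rewrite bigA_distr_bigA.
rewrite exchange_big /=; apply: big1 => s _.
under eq_bigr do rewrite big_split /=.
rewrite -mulr_suml.
have -> : \sum_(g : {ffun 'I_M -> F}) \prod_(j < n) f (g (s j)) =
          f (\sum_(g : {ffun 'I_M -> F}) \prod_(j < n) g (s j)).
  by rewrite rmorph_sum; apply: eq_bigr => g _; rewrite rmorph_prod.
by rewrite sum_ffun_monomial_eq0 // rmorph0 mul0r.
Qed.

End FinFieldPowerSums.

Definition ffun_rcons (T : finType) M (g : {ffun 'I_M -> T}) (x : T) :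
    {ffun 'I_M.+1 -> T} :=
  [ffun i => if unlift ord_max i is Some j then g j else x].

Lemma ffun_rcons_last (T : finType) M (g : {ffun 'I_M -> T}) x :
  ffun_rcons g x ord_max = x.
Proof. by rewrite ffunE unlift_none. Qed.

Lemma ffun_rcons_lift (T : finType) M (g : {ffun 'I_M -> T}) x (j : 'I_M) :
  ffun_rcons g x (lift ord_max j) = g j.
Proof. by rewrite ffunE liftK. Qed.

Lemma sum_ffun_ordS (T : finType) (V : nmodType) M (h : {ffun 'I_M.+1 -> T} -> V) :
  \sum_g h g = \sum_(x : T) \sum_(g : {ffun 'I_M -> T}) h (ffun_rcons g x).
Proof.
rewrite pair_big /= (reindex (fun p : T * {ffun 'I_M -> T} => ffun_rcons p.2 p.1)) //.
exists (fun g : {ffun 'I_M.+1 -> T} => (g ord_max, [ffun j => g (lift ord_max j)])).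
  move=> [x g] _ /=; rewrite ffun_rcons_last; congr (_, _).
  by apply/ffunP => j; rewrite ffunE ffun_rcons_lift.
move=> g _; apply/ffunP => i; rewrite ffunE.
by case: unliftP => [j -> | ->]; rewrite ?ffunE.
Qed.

Section SpecialValues.
Variables (F : finFieldType) (beta k : nat).
Local Notation R := {poly {poly F}}.

Definition eval00 : {rmorphism R -> F} := horner_eval 0 \o horner_eval 0.

Definition Sd_term (a : {poly F}) : R := chi_t a ^+ beta * a%:P ^+ k.

Lemma SdE d : Sd F beta k d = \sum_(c : {ffun 'I_d -> F}) Sd_term (monic_of c).
Proof. by []. Qed.

Lemma eval00_Sd_term a : eval00 (Sd_term a) = a`_0 ^+ (beta + k).
Proof.
rewrite rmorphM !rmorphXn exprD /= !horner_evalE hornerC !horner_coef0.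
by rewrite coef_map /= coefC.
Qed.

Lemma coef0_monic_of d (c : {ffun 'I_d.+1 -> F}) : (monic_of c)`_0 = c ord0.
Proof.
rewrite /monic_of coefD coefXn add0r coef_sum big_ord_recl coefZ coefXn mulr1.
by rewrite big1 ?addr0 // => i _; rewrite coefZ coefXn mulr0.
Qed.

Lemma eval00_Sd0 : eval00 (Sd F beta k 0) = 1.
Proof.
rewrite SdE rmorph_sum (eq_bigr (fun _ => 1)) => [|c _]; last first.
  by rewrite eval00_Sd_term /monic_of big_ord0 addr0 expr0 coefC expr1n.
by rewrite sumr_const card_ffun card_ord expn0.
Qed.

Lemma eval00_SdS d :
  eval00 (Sd F beta k d.+1) = (\sum_(x : F) x ^+ (beta + k)) * #|F|%:R ^+ d.
Proof.
pose G (i : 'I_d.+1) (x : F) := if i == ord0 then x ^+ (beta + k) else 1.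
rewrite SdE rmorph_sum.
transitivity (\sum_(c : {ffun 'I_d.+1 -> F}) \prod_i G i (c i)).
  apply: eq_bigr => c _; rewrite eval00_Sd_term coef0_monic_of big_ord_recl /G eqxx.
  by rewrite big1 ?mulr1 // => i _; rewrite eq_sym (negbTE (neq_lift _ _)).
rewrite -bigA_distr_bigA big_ord_recl /G eqxx /=; congr (_ * _).
rewrite (eq_bigr (fun _ => #|F|%:R)) ?prodr_const ?card_ord // => i _.
by rewrite sumr_const cardT -cardE.
Qed.

Definition poly_of_ffun M (g : {ffun 'I_M -> F}) : {poly F} :=
  \sum_(i < M) g i *: 'X^i.

Definition Slt M : R := \sum_(g : {ffun 'I_M -> F}) Sd_term (poly_of_ffun g).

Lemma Sd_term_expand M (g : {ffun 'I_M -> F}) :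
  Sd_term (poly_of_ffun g) = \prod_(j < beta + k) \sum_(i < M)
    (g i)%:P%:P * (if (j < beta)%N then 'X^i else ('X^i)%:P).
Proof.
rewrite big_split_ord /Sd_term; congr (_ * _).
  rewrite (eq_bigr (fun _ => chi_t (poly_of_ffun g))) => [|j _].
    by rewrite prodr_const card_ord.
  rewrite /= ltn_ord /chi_t raddf_sum; apply: eq_bigr => i _.
  by rewrite /= map_polyZ map_polyXn mul_polyC.
rewrite (eq_bigr (fun _ => (poly_of_ffun g)%:P)) => [|j _].
  by rewrite prodr_const card_ord.
rewrite /= ltnNge leq_addr rmorph_sum; apply: eq_bigr => i _.
by rewrite /= -mul_polyC rmorphM.
Qed.

Lemma Slt_eq0 M : (beta + k < M * #|F|.-1)%N -> Slt M = 0.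
Proof.
move=> lt_M; rewrite /Slt; under eq_bigr do rewrite Sd_term_expand.
exact: (sum_ffun_prod_linear_eq0 (polyC \o polyC)).
Qed.

Lemma Slt0 : (0 < k)%N -> Slt 0 = 0.
Proof.
move=> k_gt0; rewrite /Slt big1 // => g _.
by rewrite /poly_of_ffun big_ord0 /Sd_term polyC0 expr0n gtn_eqF // mulr0.
Qed.

Lemma Sd_termZ x a : Sd_term (x *: a) = (x ^+ (beta + k))%:P%:P * Sd_term a.
Proof.
rewrite /Sd_term /chi_t map_polyZ /= -!mul_polyC polyCM !exprMn exprD !rmorphM.
by rewrite !rmorphXn /= mulrACA [_ * (_%:P ^+ k)]mulrC.
Qed.

Lemma poly_of_ffun_rcons M (g : {ffun 'I_M -> F}) x :
  poly_of_ffun (ffun_rcons g x) = poly_of_ffun g + x *: 'X^M.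
Proof.
rewrite /poly_of_ffun big_ord_recr /= -[ord_max]/(@ord_max M) ffun_rcons_last.
congr (_ + _); apply: eq_bigr => i _.
have -> : widen_ord (leqnSn M) i = lift ord_max i.
  by apply: val_inj; rewrite /= /bump leqNgt ltn_ord.
by rewrite ffun_rcons_lift.
Qed.

(* The polynomials of degree M with leading coefficient x are x times the monic ones. *)
Lemma sum_Sd_term_lead_coef M x :
  x != 0 -> (#|F|.-1 %| beta + k)%N ->
  \sum_(g : {ffun 'I_M -> F}) Sd_term (poly_of_ffun g + x *: 'X^M) = Sd F beta k M.
Proof.
move=> x_neq0 dvd_q1; pose scale (g : {ffun 'I_M -> F}) := [ffun i => x * g i].
have scale_inj : injective scale.
  move=> g1 g2 /ffunP eq_g; apply/ffunP => i; have := eq_g i; rewrite !ffunE.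
  by apply: mulfI.
rewrite SdE (reindex_inj scale_inj); apply: eq_bigr => g _.
have -> : poly_of_ffun (scale g) + x *: 'X^M = x *: monic_of g.
  rewrite /monic_of scalerDr addrC; congr (_ + _).
  rewrite /poly_of_ffun scaler_sumr; apply: eq_bigr => i _.
  by rewrite ffunE scalerA.
by rewrite Sd_termZ expf_card_pred_dvdn // mul1r.
Qed.

Lemma Slt_succ M : (#|F|.-1 %| beta + k)%N -> Slt M.+1 = Slt M - Sd F beta k M.
Proof.
move=> dvd_q1; rewrite /Slt sum_ffun_ordS.
under eq_bigr do under eq_bigr do rewrite poly_of_ffun_rcons.
rewrite (bigD1 0) //=; under eq_bigr do rewrite scale0r addr0.
congr (_ + _); rewrite (eq_bigr _ (fun x x_neq0 => sum_Sd_term_lead_coef M x_neq0 dvd_q1)).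
rewrite sumr_const cardC1 -mulr_natr.
rewrite -[_%:R](rmorph_nat (polyC \o polyC : {rmorphism F -> R})) /=.
by rewrite natr_card_pred_finField !polyCN mulrN1.
Qed.

Lemma Slt_Ltrunc M :
  (0 < k)%N -> (#|F|.-1 %| beta + k)%N -> Slt M = - Ltrunc F beta k M.
Proof.
move=> k_gt0 dvd_q1; elim: M => [|M IH]; first by rewrite Slt0 // /Ltrunc big_ord0 oppr0.
by rewrite Slt_succ // IH /Ltrunc big_ord_recr opprD.
Qed.

Lemma Ltrunc_eq0 N :
  (0 < k)%N -> (#|F|.-1 %| beta + k)%N ->
  (forall d, (N <= d)%N -> Sd F beta k d = 0) -> Ltrunc F beta k N = 0.
Proof.
move=> k_gt0 dvd_q1 Sd_eq0; pose M := (N + (beta + k).+1)%N.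
have -> : Ltrunc F beta k N = Ltrunc F beta k M.
  rewrite /Ltrunc big_split_ord /= [X in _ = _ + X]big1 ?addr0 // => d _.
  by rewrite Sd_eq0 // leq_addr.
apply/eqP; rewrite -oppr_eq0 -Slt_Ltrunc // Slt_eq0 //.
have q1_gt0 : (0 < #|F|.-1)%N by rewrite -subn1 subn_gt0 finNzRing_gt1.
by rewrite (leq_trans _ (leq_pmulr _ q1_gt0)) // leq_addl.
Qed.

Lemma eval00_Ltrunc N :
  ~~ (#|F|.-1 %| beta + k)%N -> (0 < N)%N -> eval00 (Ltrunc F beta k N) = 1.
Proof.
move=> ndvd_q1; case: N => // N _.
rewrite /Ltrunc rmorph_sum big_ord_recl eval00_Sd0 big1 ?addr0 // => d _.
by rewrite lift0 eval00_SdS sum_expf (negbTE ndvd_q1) andbF mul0r.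
Qed.

Lemma eval00_dzdx_at1 N :
  (0 < k)%N -> (#|F|.-1 %| beta + k)%N -> (1 < N)%N ->
  eval00 (dzdx_at1_trunc F beta k N) = 1.
Proof.
move=> k_gt0 dvd_q1; case: N => [|[|N]] // _.
rewrite /dzdx_at1_trunc rmorph_sum !big_ord_recl big1 ?addr0 => [|d _]; last first.
  by rewrite !lift0 rmorphM eval00_SdS natr_card_finField expr0n /= !mulr0.
rewrite !rmorphM !rmorphN !rmorph_nat eval00_Sd0 lift0 eval00_SdS sum_expf.
by rewrite addn_gt0 k_gt0 orbT dvd_q1 oppr0 mul0r add0r expr0 mulr1 mulN1r opprK.
Qed.

End SpecialValues.

Theorem theorem2p0p3 (F : finFieldType) (beta k N : nat) :
  (0 < k)%N ->
  (forall d : nat, (N <= d)%N -> Sd F beta k d = 0) ->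
  (((#|F|).-1 %| beta + k)%N ->
     Ltrunc F beta k N = 0 /\ dzdx_at1_trunc F beta k N != 0) /\
  (~~ ((#|F|).-1 %| beta + k)%N -> Ltrunc F beta k N != 0).
Proof.
move=> k_gt0 Sd_eq0.
have neq0_eval00 (p : {poly {poly F}}) : eval00 F p != 0 -> p != 0.
  by apply: contraNneq => ->; rewrite rmorph0.
have lt_N d : eval00 F (Sd F beta k d) != 0 -> (d < N)%N.
  by apply: contraTT; rewrite -leqNgt => /Sd_eq0 ->; rewrite rmorph0 eqxx.
split=> [dvd_q1 | ndvd_q1].
  split; first exact: Ltrunc_eq0.
  have N_gt1 : (1 < N)%N.
    apply: lt_N; rewrite eval00_SdS sum_expf addn_gt0 k_gt0 orbT dvd_q1.
    by rewrite expr0 mulr1 oppr_eq0 oner_eq0.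
  by apply: neq0_eval00; rewrite eval00_dzdx_at1 // oner_eq0.
have N_gt0 : (0 < N)%N by apply: lt_N; rewrite eval00_Sd0 oner_eq0.
by apply: neq0_eval00; rewrite eval00_Ltrunc // oner_eq0.
Qed.
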